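(* Let $S=\{A,B\}$ be a two-element set and let $s,s':I_m\to S$ be mirrored. Then $s=s'$ or $s=\mathrm{rev}\,s'$.
   Context: $\mathscr{T}_m=\{\sigma\in\mathcal{S}_m \mid \exists t:\ \sigma(1)>\cdots>\sigma(t)=1,\ \sigma(t)<\cdots<\sigma(m)\}$, $\mathcal{S}_m$ acting on sequences $s:I_m\to S$ by $\sigma s=s\circ\sigma^{-1}$. $\mathrm{rev}\,s$ is the reversed sequence, $(\mathrm{rev}\,s)(i)=s(m+1-i)$. Two sequences $s,s'$ are mirrored if for every $\sigma\in\mathscr{T}_m$ there is $\sigma'\in\mathscr{T}_m$ with $\sigma s=\sigma's'$, and for every $\tau'\in\mathscr{T}_m$ there is $\tau\in\mathscr{T}_m$ with $\tau's'=\tau s$. *)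

(* Indices I_m = {1..m} are rendered 0-based as 'I_m. *)
From mathcomp Require Import all_boot all_fingroup.
Set Implicit Arguments. Unset Strict Implicit. Unset Printing Implicit Defensive.

Definition in_T (m : nat) (sigma : {perm 'I_m}) : Prop :=
  exists t : 'I_m,
    [/\ val (sigma t) = 0,
        (forall i j : 'I_m, i < j -> j <= t -> sigma j < sigma i)
      & (forall i j : 'I_m, t <= i -> i < j -> sigma i < sigma j)].

Definition act_seq (m : nat) (S : Type) (sigma : {perm 'I_m}) (s : 'I_m -> S)
  : 'I_m -> S := fun i => s ((sigma^-1)%g i).

Definition rev_seq (m : nat) (S : Type) (s : 'I_m -> S) : 'I_m -> S :=
  fun i => s (rev_ord i).

Definition mirrored (m : nat) (S : Type) (s s' : 'I_m -> S) : Prop :=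
  (forall sigma, in_T sigma -> exists sigma', in_T sigma' /\
      act_seq sigma s = act_seq sigma' s') /\
  (forall tau', in_T tau' -> exists tau, in_T tau /\
      act_seq tau' s' = act_seq tau s).

From mathcomp Require Import all_boot all_fingroup.
From mathcomp Require Import zify.
From Stdlib Require Import FunctionalExtensionality.
Set Implicit Arguments. Unset Strict Implicit. Unset Printing Implicit Defensive.

(* Read backwards, the sequence [sigma s] with [sigma] in T_m lists [s] by
   removing at each step the first or the last remaining letter: along the V
   shape of [sigma], the largest remaining value always sits at an end.  So two
   mirrored sequences have the same set of such "peel" words, and it suffices
   to show that this set determines a word up to reversal, over any alphabet.
   Write the word as X^a u X^b, where X is its first letter and u neither
   starts nor ends with X.  The peel words determine a + b, min(a, b) and the
   peel words of u, so by induction u is determined up to reversal.  The only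
   remaining ambiguity, u against its reversal when a <> b, is settled by the
   words starting with X^min(a,b): they force u to be periodic, hence a
   palindrome. *)

Section Peel.
Variable T : Type.
Implicit Types (x y : T) (l w : seq T).

Inductive peel : seq T -> seq T -> Prop :=
| peel_nil : peel [::] [::]
| peel_head x l w : peel l w -> peel (x :: l) (x :: w)
| peel_last x l w : peel l w -> peel (rcons l x) (x :: w).

Definition peel_eqv l l' := forall w, peel l w <-> peel l' w.

Lemma peel_refl l : peel l l.
Proof. by elim: l => [|x l IHl]; constructor. Qed.

Lemma peel_rev l : peel l (rev l).
Proof. by elim/last_ind: l => [|l x IHl]; rewrite ?rev_rcons; constructor. Qed.

Lemma peel_revl l w : peel l w -> peel (rev l) w.
Proof. by elim=> *; rewrite ?rev_cons ?rev_rcons; constructor. Qed.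

Lemma peel_revE l w : peel (rev l) w <-> peel l w.
Proof. by split=> /peel_revl; rewrite ?revK. Qed.

Lemma peel_eqv_sym l l' : peel_eqv l l' -> peel_eqv l' l.
Proof. by move=> Peq w; rewrite Peq. Qed.

Lemma peel_cons_inv l x w :
  peel l (x :: w) -> exists2 l0, l = x :: l0 \/ l = rcons l0 x & peel l0 w.
Proof. by move=> H; inversion H; subst; eexists; eauto. Qed.

Lemma peel_catl p l w : peel l w -> peel (p ++ l) (p ++ w).
Proof. by elim: p => //= x p IHp /IHp; constructor. Qed.

Lemma peel_catr q l w : peel l w -> peel (l ++ q) (rev q ++ w).
Proof.
elim/last_ind: q => [|q x IHq] H; first by rewrite cats0.
by rewrite -rcons_cat rev_rcons; constructor; apply: IHq.
Qed.

End Peel.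

Arguments peel_cons_inv {T l x w}.

Lemma peel_map (T U : Type) (f : T -> U) l w :
  peel l w -> peel (map f l) (map f w).
Proof. by elim=> *; rewrite /= ?map_rcons; constructor. Qed.

Lemma peel_map_inv (T U : Type) (f : T -> U) l W :
  peel (map f l) W -> exists2 w, peel l w & W = map f w.
Proof.
move eL: (map f l) => L H; elim: H l eL => [|y L0 W0 _ IH|y L0 W0 _ IH] l.
- by case: l => // _; exists [::]; first constructor.
- case: l => [|x l] //= [<- /IH[w ? ->]].
  by exists (x :: w); first constructor.
- case/lastP: l => [|l x]; first by case: L0 {IH}.
  rewrite map_rcons => /rcons_inj[/IH[w ? ->] <-].
  by exists (x :: w); first constructor.
Qed.

Section Pad.
Variables (T : eqType) (X : T).
Implicit Types (y : T) (l u v w : seq T).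

Lemma peel_perm l w : peel l w -> perm_eq l w.
Proof. by elim=> // x l0 w0 _; rewrite ?perm_rcons perm_cons. Qed.

Lemma peel_nseq n w : peel (nseq n X) w -> w = nseq n X.
Proof.
move/peel_perm=> pw; have /all_pred1P -> : all (pred1 X) w.
  by rewrite -(perm_all _ pw) all_pred1_nseq.
by rewrite -(perm_size pw) size_nseq.
Qed.

Lemma peel_cat_inv l w1 w2 : peel l (w1 ++ w2) ->
  exists p l1 q, [/\ l = p ++ l1 ++ q, perm_eq (p ++ q) w1 & peel l1 w2].
Proof.
elim: w1 l => [|x w1 IHw] l /=; first by exists [::], l, [::]; rewrite cats0.
move=> H; have [l0 [->|->] /IHw[p [l1 [q [-> pq Hl1]]]]] := peel_cons_inv H.
  by exists (x :: p), l1, q; rewrite perm_cons.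
exists p, l1, (rcons q x); split=> //; first by rewrite -!rcons_cat.
by rewrite -rcons_cat perm_rcons perm_cons.
Qed.

Definition pad a b u := nseq a X ++ u ++ nseq b X.

(* In particular an unpadded word is not empty. *)
Definition unpadded u := (head X u != X) && (last X u != X).

Lemma head_rev u : head X (rev u) = last X u.
Proof. by case/lastP: u => // u y; rewrite rev_rcons last_rcons. Qed.

Lemma unpadded_rev u : unpadded (rev u) = unpadded u.
Proof.
rewrite /unpadded head_rev andbC; congr (_ && _).
by case: u => // y u; rewrite rev_cons last_rcons.
Qed.

Lemma rev_pad a b u : rev (pad a b u) = pad b a (rev u).
Proof. by rewrite /pad !rev_cat !rev_nseq catA. Qed.

Lemma pad_rcons a b u : rcons (pad a b u) X = pad a b.+1 u.
Proof. by rewrite /pad !rcons_cat; congr (_ ++ _ ++ _); elim: b => //= b ->. Qed.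

Lemma pad_cons a b u :
  unpadded u -> pad a b u = nseq a X ++ head X u :: behead u ++ nseq b X.
Proof. by case: u => [|y u] //; rewrite /unpadded eqxx. Qed.

Lemma size_pad a b u : size (pad a b u) = a + size u + b.
Proof. by rewrite !size_cat !size_nseq addnA. Qed.

Lemma pad_prefix_le a b u i l1 :
  unpadded u -> pad a b u = nseq i X ++ l1 -> i <= a.
Proof.
case/andP=> hu _ E; rewrite leqNgt; apply: contra hu => lt_ai.
move/(congr1 (nth X ^~ a)): E; rewrite /= !nth_cat !size_nseq ltnn subnn.
by rewrite lt_ai !nth_nseq lt_ai; case: u => [|y u] /= => [_|->]; rewrite eqxx.
Qed.

Lemma pad_eq a b u i j l1 : unpadded u ->
  pad a b u = nseq i X ++ l1 ++ nseq j X ->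
  [/\ i <= a, j <= b & l1 = pad (a - i) (b - j) u].
Proof.
move=> hu E; have le_ia : i <= a := pad_prefix_le hu E.
have le_jb : j <= b.
  apply: (@pad_prefix_le b a (rev u) j (rev l1 ++ nseq i X)).
    by rewrite unpadded_rev.
  by rewrite -rev_pad E !rev_cat !rev_nseq catA.
split=> //; have := congr1 size E; rewrite !size_cat !size_nseq => Esize.
move/eqP: E; rewrite /pad -[in nseq a X](subnKC le_ia).
rewrite -[in nseq b X](subnK le_jb) !nseqD -!catA eqseq_cat ?size_nseq //=.
rewrite eqxx /= !catA eqseq_cat => [/andP[/eqP <- //]|].
by rewrite !size_cat !size_nseq; lia.
Qed.

Lemma peel_pad_nseq a b u k v : unpadded u ->
  peel (pad a b u) (nseq k X ++ v) ->
  exists i j, [/\ k = i + j, i <= a, j <= b & peel (pad (a - i) (b - j) u) v].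
Proof.
move=> hu /peel_cat_inv[p [l1 [q [E pq H]]]].
have /andP[/all_pred1P Ep /all_pred1P Eq] : all (pred1 X) p && all (pred1 X) q.
  by rewrite -all_cat (perm_all _ pq) all_pred1_nseq.
rewrite Ep Eq in E; have [le_ia le_jb El1] := pad_eq hu E.
exists (size p), (size q); split=> //; last by rewrite -El1.
by rewrite -size_cat (perm_size pq) size_nseq.
Qed.

Lemma peel_pad_cons a b u y v :
  y != X -> peel (pad a b u) (y :: v) -> a = 0 \/ b = 0.
Proof.
move=> hy /peel_cons_inv[l0 [E|E] _]; [left|right].
  by case: a E => // a [Ey]; rewrite Ey eqxx in hy.
by case: b E => // b; rewrite -pad_rcons => /rcons_inj[_ Ey]; rewrite Ey eqxx in hy.
Qed.

Lemma peel_pad_full a b u v :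
  unpadded u -> peel (pad a b u) (nseq (a + b) X ++ v) <-> peel u v.
Proof.
move=> hu; split.
  case/(peel_pad_nseq hu)=> i [j [Ek le_ia le_jb]].
  have [-> ->] : a - i = 0 /\ b - j = 0 by lia.
  by rewrite /pad cats0.
move/(peel_catr (nseq b X)); rewrite rev_nseq => H.
by rewrite /pad nseqD -catA; apply: peel_catl.
Qed.

Lemma peel_pad_max a b u k v :
  unpadded u -> peel (pad a b u) (nseq k X ++ v) -> k <= a + b.
Proof. by move=> hu /(peel_pad_nseq hu)[i [j [-> ? ? _]]]; lia. Qed.

Lemma peel_pad_min a b u k y v : unpadded u -> y != X ->
  peel (pad a b u) (nseq k X ++ y :: v) -> minn a b <= k.
Proof.
move=> hu hy /(peel_pad_nseq hu)[i [j [-> ? ? /(peel_pad_cons hy) ?]]]; lia.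
Qed.

Lemma peel_pad_short a b u y v : a < b -> unpadded u -> y != X ->
  peel (pad a b u) (nseq a X ++ y :: v) <->
  y = head X u /\ peel (behead u ++ nseq b X) v.
Proof.
move=> lt_ab hu hy; split; last first.
  by case=> -> H; rewrite pad_cons //; apply: peel_catl; constructor.
case/(peel_pad_nseq hu)=> i [j [Ea le_ia le_jb H]].
have [Ei Ej] : a - i = 0 /\ b - j = b by case: (peel_pad_cons hy H); lia.
rewrite Ei Ej in H; case/peel_cons_inv: H => l0 [|] E H.
  case: u hu E => [|z u] hu; first by rewrite /unpadded eqxx in hu.
  by rewrite /pad /= => -[<- El0]; rewrite El0.
move: E; case: b {le_jb Ej} lt_ab => // b _.
by rewrite -pad_rcons => /rcons_inj[_ Ey]; rewrite Ey eqxx in hy.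
Qed.

Lemma pad_decomp l : exists a b u, l = pad a b u /\ (u = [::] \/ unpadded u).
Proof.
elim: {l}(size l).+1 {-2}l (ltnSn (size l)) => // n IHn [|x l] lt_ln.
  by exists 0, 0, [::]; split; [|left].
have [->|hx] := eqVneq x X.
  by have [a [b [u [-> Hu]]]] := IHn l lt_ln; exists a.+1, b, u.
have [hl|hl] := eqVneq (last x l) X.
  have lt_bn : size (belast x l) < n by rewrite size_belast.
  have [a [b [u [Eb Hu]]]] := IHn _ lt_bn.
  by exists a, b.+1, u; rewrite lastI hl Eb pad_rcons.
by exists 0, 0, (x :: l); rewrite /pad cats0; split; last by right; apply/andP.
Qed.

Lemma peel_eqv_pad_sum a b u a' b' u' : unpadded u -> unpadded u' ->
  peel_eqv (pad a b u) (pad a' b' u') -> a + b <= a' + b'.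
Proof.
move=> hu hu' Peq; apply: (peel_pad_max (u := u') (v := u)) => //.
by apply/Peq/(peel_pad_full _ _ _ hu); apply: peel_refl.
Qed.

Lemma peel_eqv_pad_min a b u a' b' u' : unpadded u -> unpadded u' ->
  peel_eqv (pad a b u) (pad a' b' u') -> minn a' b' <= minn a b.
Proof.
move=> hu hu' Peq; rewrite leq_min; apply/andP; split.
  have := peel_refl (pad a b u); rewrite {2}pad_cons // => /(Peq _).1.
  by apply: peel_pad_min hu' _; case/andP: hu.
have hur : unpadded (rev u) by rewrite unpadded_rev.
have := peel_rev (pad a b u); rewrite rev_pad [pad b a _]pad_cons // => /(Peq _).1.
by apply: peel_pad_min hu' _; case/andP: hur.
Qed.

Lemma peel_eqv_pad_inner a b u a' b' u' : unpadded u -> unpadded u' ->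
  a + b = a' + b' -> peel_eqv (pad a b u) (pad a' b' u') -> peel_eqv u u'.
Proof.
move=> hu hu' Hsum Peq v.
by rewrite -(peel_pad_full a b _ hu) Peq Hsum (peel_pad_full _ _ _ hu').
Qed.

Lemma shift_palindrome y b u r p : y != X -> u = y :: r -> u = rcons p y ->
  r ++ nseq b X = nseq b X ++ p -> rev u = u.
Proof.
move=> hy Eu Eu' Erp.
have size_p : size p = size r by move: (congr1 size Eu); rewrite Eu' size_rcons => -[].
have nth_u k : k < size u -> nth X u k = if b.+1 %| k then y else X.
  elim/ltn_ind: k => -[_ _|i IH lt_i]; first by rewrite Eu dvdn0.
  have lt_ir : i < size r by move: lt_i; rewrite Eu.
  have -> : nth X u i.+1 = nth X (nseq b X ++ p) i by rewrite -Erp Eu /= nth_cat lt_ir.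
  rewrite nth_cat size_nseq; case: ltnP => [lt_ib|le_bi].
    rewrite nth_nseq lt_ib; case: ifP => // /dvdn_leq; lia.
  have -> : nth X p (i - b) = nth X u (i - b).
    by rewrite Eu' nth_rcons size_p; case: ltnP => //; lia.
  rewrite IH; [|lia|lia].
  by rewrite [in RHS](_ : i.+1 = i - b + b.+1) ?(dvdn_addl _ (dvdnn _)) //; lia.
have dvd_last : b.+1 %| (size u).-1.
  apply: contraNT hy => ndvd; apply/eqP.
  by rewrite -[y](last_rcons X p) -Eu' -nth_last nth_u ?(negbTE ndvd) // Eu.
apply: (@eq_from_nth _ X); rewrite ?size_rev // => k lt_k.
rewrite nth_rev // !nth_u //; last lia.
by rewrite (_ : size u - k.+1 = (size u).-1 - k) ?dvdn_subr //; lia.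
Qed.

End Pad.

Section PeelEqvRev.
Variables (T : eqType) (N : nat).
Hypothesis IHN : forall l l' : seq T,
  size l < N -> peel_eqv l l' -> l = l' \/ l = rev l'.

Lemma pad_palindrome (X : T) a b u : a < b -> unpadded X u ->
  size (pad X a b u) <= N -> peel_eqv (pad X a b u) (pad X a b (rev u)) ->
  rev u = u.
Proof.
move=> lt_ab hu le_N Peq; have hu' : unpadded X (rev u) by rewrite unpadded_rev.
have [y [r Eu]] : exists y r, u = y :: r.
  by case: u hu {le_N Peq hu'} => [|y r]; [rewrite /unpadded eqxx | exists y, r].
have [z [q Eru]] : exists z q, rev u = z :: q.
  by case: (rev u) hu' => [|z q]; [rewrite /unpadded eqxx | exists z, q].
have hy : y != X by case/andP: hu; rewrite Eu.
have Eshort v : (y = head X u /\ peel (behead u ++ nseq b X) v) <->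
                (y = head X (rev u) /\ peel (behead (rev u) ++ nseq b X) v).
  split=> /(peel_pad_short v lt_ab _ hy) H.
    by apply/(peel_pad_short v lt_ab hu' hy)/Peq; apply: H.
  by apply/(peel_pad_short v lt_ab hu hy)/Peq; apply: H.
rewrite Eru Eu /= in Eshort.
have [Ezy _] := (Eshort (r ++ nseq b X)).1 (conj erefl (peel_refl _)).
have Peq_rq : peel_eqv (r ++ nseq b X) (q ++ nseq b X).
  by move=> v; split=> [/(conj erefl)/Eshort[]|H] //; case: (Eshort v).2.
have lt_rN : size (r ++ nseq b X) < N.
  by move: le_N; rewrite size_pad Eu size_cat size_nseq /=; lia.
case: (IHN lt_rN Peq_rq) => [/eqP|Erq].
  rewrite eqseq_cat => [/andP[/eqP Erq _]|]; first by rewrite Eru Eu Ezy Erq.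
  by move: (congr1 size Eru); rewrite size_rev Eu => -[].
(* Here [r ++ X^b = X^b ++ belast u], which makes [u] periodic. *)
apply: (shift_palindrome hy Eu (p := rev q) (b := b)).
  by rewrite -[u]revK Eru -Ezy rev_cons.
by rewrite Erq rev_cat rev_nseq.
Qed.

Lemma pad_eqv_rev (X : T) a b u u' : unpadded X u -> size (pad X a b u) <= N ->
  u' = u \/ u' = rev u -> peel_eqv (pad X a b u) (pad X a b u') ->
  pad X a b u = pad X a b u' \/ pad X a b u = rev (pad X a b u').
Proof.
move=> hu le_N [->|->] Peq; first by left.
case: (ltngtP a b) => [lt_ab|lt_ba|<-]; last by right; rewrite rev_pad revK.
  by left; rewrite (pad_palindrome lt_ab hu le_N Peq).
have Peq' : peel_eqv (pad X b a (rev u)) (pad X b a (rev (rev u))).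
  move=> w; rewrite -(rev_pad _ a) -(rev_pad _ a) !peel_revE; apply: Peq.
have hu' : unpadded X (rev u) by rewrite unpadded_rev.
have le_N' : size (pad X b a (rev u)) <= N by rewrite -rev_pad size_rev.
by have := pad_palindrome lt_ba hu' le_N' Peq'; rewrite revK => <-; left.
Qed.

Lemma peel_eqv_pad_rev (X : T) a b u a' b' u' :
  unpadded X u -> unpadded X u' -> 0 < a + b -> size (pad X a b u) <= N ->
  peel_eqv (pad X a b u) (pad X a' b' u') ->
  pad X a b u = pad X a' b' u' \/ pad X a b u = rev (pad X a' b' u').
Proof.
move=> hu hu' ab_gt0 le_N Peq; have Peq' := peel_eqv_sym Peq.
have Hsum : a + b = a' + b'.
  apply/anti_leq; rewrite (peel_eqv_pad_sum hu hu' Peq).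
  exact: peel_eqv_pad_sum hu' hu Peq'.
have Hmin : minn a b = minn a' b'.
  apply/anti_leq; rewrite (peel_eqv_pad_min hu' hu Peq').
  exact: peel_eqv_pad_min hu hu' Peq.
have lt_uN : size u < N by move: le_N; rewrite size_pad; lia.
have Eu' : u' = u \/ u' = rev u.
  have [->|->] := IHN lt_uN (peel_eqv_pad_inner hu hu' Hsum Peq); first by left.
  by right; rewrite revK.
have [[Ea Eb]|[Ea Eb]] : (a' = a /\ b' = b) \/ (a' = b /\ b' = a) by lia.
  by rewrite Ea Eb in Peq *; apply: pad_eqv_rev.
rewrite Ea Eb in Peq *.
have Eu'' : rev u' = u \/ rev u' = rev u.
  by case: Eu' => ->; [right|left; rewrite revK].
have Peq_rev : peel_eqv (pad X a b u) (pad X a b (rev u')).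
  by move=> w; rewrite Peq -peel_revE rev_pad.
have [->|->] := pad_eqv_rev hu le_N Eu'' Peq_rev; [right|left].
  by rewrite rev_pad.
by rewrite rev_pad revK.
Qed.

Lemma peel_eqv_rev_step (l l' : seq T) :
  size l <= N -> peel_eqv l l' -> l = l' \/ l = rev l'.
Proof.
case: l => [|X l0] le_N Peq.
  by left; move/peel_perm/perm_nilP: ((Peq [::]).1 (peel_refl _)).
have [a [b [u [El0 [u0|hu]]]]] := pad_decomp X l0.
  left; rewrite El0 u0 /pad cat0s -nseqD -[X :: _]/(nseq (a + b).+1 X) in Peq *.
  by move/peel_nseq: ((Peq l').2 (peel_refl l')).
have [a' [b' [u' [El' [u0'|hu']]]]] := pad_decomp X l'.
  left; rewrite El' u0' [pad X a' b' _]/pad cat0s -nseqD in Peq *.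
  by move/peel_nseq: ((Peq _).1 (peel_refl _)).
have El : X :: l0 = pad X a.+1 b u by rewrite El0.
by rewrite El El' in le_N Peq *; apply: peel_eqv_pad_rev.
Qed.

End PeelEqvRev.

Theorem peel_eqv_rev (T : eqType) (l l' : seq T) :
  peel_eqv l l' -> l = l' \/ l = rev l'.
Proof.
elim: (size l).+1 {-2}l l' (ltnSn (size l)) => // N IHN {}l l' lt_lN.
exact: (peel_eqv_rev_step IHN).
Qed.

Section VShaped.
Variable T : eqType.
Implicit Types (f : T -> nat) (x y : T) (l w : seq T).

Definition vshaped f l :=
  forall x y z, subseq [:: x; y; z] l -> f y < maxn (f x) (f z).

Lemma vshaped_subseq f l1 l2 : subseq l1 l2 -> vshaped f l2 -> vshaped f l1.
Proof. by move=> s12 V x y z /subseq_trans/(_ s12)/V. Qed.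

Lemma vshaped_rev f l : vshaped f l -> vshaped f (rev l).
Proof.
move=> V x y z H; rewrite maxnC; apply: V.
by rewrite -subseq_rev.
Qed.

Lemma vshaped_eq_in f g l : {in l, f =1 g} -> vshaped f l -> vshaped g l.
Proof.
move=> Efg V x y z H; have E k : k \in [:: x; y; z] -> f k = g k.
  by move/(mem_subseq H)/Efg.
by rewrite -!E ?inE ?eqxx ?orbT //; apply: V.
Qed.

Lemma vshaped_cons f x l :
  vshaped f l -> {in l, forall y, f y < f x} -> vshaped f (x :: l).
Proof.
move=> V lt_x a b c /=; case: eqP => [->{a} H|_ /V //].
have /lt_x lt_b : b \in l by apply: (mem_subseq H); rewrite mem_head.
by rewrite leq_max lt_b.
Qed.

Lemma vshaped_max_end f l x : vshaped f l -> x \in l ->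
  {in l, forall y, f y <= f x} -> exists l0, l = x :: l0 \/ l = rcons l0 x.
Proof.
move=> + xl; case/splitPr: xl => p q; case: p => [|y p]; first by exists q; left.
case/lastP: q => [|q z]; first by exists (y :: p); right; rewrite cats1.
move=> V le_x; have sub_yxz : subseq [:: y; x; z] (y :: p ++ x :: rcons q z).
  rewrite /= eqxx; apply: subseq_trans (suffix_subseq p _).
  by rewrite /= eqxx sub1seq mem_rcons mem_head.
have := V _ _ _ sub_yxz; rewrite ltnNge geq_max !le_x //;
  by rewrite !(mem_cat, inE, mem_rcons, eqxx, orbT).
Qed.

(* [index x (rev w)] ranks the letters by reverse order of removal. *)
Lemma peel_vshaped l w : uniq l -> peel l w -> vshaped (fun x => index x (rev w)) l.
Proof.
have step x l0 w0 : uniq (x :: l0) -> perm_eq l0 w0 ->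
    vshaped (fun y => index y (rev w0)) l0 ->
    vshaped (fun y => index y (rev (x :: w0))) (x :: l0).
  move=> /andP[xl0 _] p0 V; have mem_w0 y : (y \in rev w0) = (y \in l0).
    by rewrite mem_rev (perm_mem p0).
  rewrite rev_cons -cats1; apply: vshaped_cons.
    by apply: vshaped_eq_in V => y yl0; rewrite index_cat mem_w0 yl0.
  move=> y yl0; rewrite !index_cat mem_w0 yl0 mem_w0 (negbTE xl0) /= eqxx addn0.
  by rewrite index_mem mem_w0.
move=> + H; elim: H => [|x l0 w0 H IH|x l0 w0 H IH] ul; first by move=> ? ? ?.
  by apply: step ul (peel_perm H) (IH (andP ul).2).
rewrite -[rcons l0 x]revK rev_rcons; apply/vshaped_rev/step.
- by rewrite -rev_rcons rev_uniq.
- by rewrite perm_rev; apply: peel_perm H.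
- by apply/vshaped_rev/IH; move: ul; rewrite rcons_uniq => /andP[].
Qed.

Lemma vshaped_peel f l w : vshaped f l -> perm_eq l w ->
  sorted (fun x y => f y < f x) w -> peel l w.
Proof.
elim: w l => [|x w IHw] l V plw sw; first by move/perm_nilP: plw ->; constructor.
have lt_x : all (fun y => f y < f x) w.
  by apply: order_path_min sw => a b c h1 h2; apply: ltn_trans h2 h1.
have le_x : {in l, forall y, f y <= f x}.
  move=> y; rewrite (perm_mem plw) inE => /predU1P[-> //|yw].
  by apply: ltnW; apply: (allP lt_x).
have xl : x \in l by rewrite (perm_mem plw) mem_head.
have sw' := path_sorted sw.
have [l0 [El|El]] := vshaped_max_end V xl le_x; rewrite El in V plw *; constructor.
  by apply: IHw (vshaped_subseq (subseq_cons l0 x) V) _ sw'; rewrite -(perm_cons x).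
apply: IHw (vshaped_subseq (subseq_rcons l0 x) V) _ sw'.
by rewrite -(perm_cons x) -(perm_rcons x l0).
Qed.

End VShaped.

Lemma sorted_enum_ord n : sorted (fun i j : 'I_n => i < j) (enum 'I_n).
Proof. by have := iota_ltn_sorted 0 n; rewrite -val_enum_ord sorted_map. Qed.

Lemma ltn_ord_trans n : transitive (fun i j : 'I_n => i < j).
Proof. by move=> ? ? ? /ltn_trans; apply. Qed.

Lemma subseq_enum_ord n (s : seq 'I_n) :
  sorted (fun i j : 'I_n => i < j) s -> subseq s (enum 'I_n).
Proof.
move=> ss; apply/subseq_uniqP; first exact: enum_uniq.
apply: (irr_sorted_eq (@ltn_ord_trans n)) => //.
- by move=> i; rewrite ltnn.
- by apply: sorted_filter; [apply: ltn_ord_trans | apply: sorted_enum_ord].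
- by move=> i; rewrite mem_filter mem_enum andbT.
Qed.

Lemma in_T_vshaped n (sigma : {perm 'I_n.+1}) :
  in_T sigma <-> vshaped (fun i => sigma i : nat) (enum 'I_n.+1).
Proof.
split.
  case=> t [_ dec inc] i j k.
  move/(subseq_sorted (@ltn_ord_trans _))/(_ (sorted_enum_ord _)).
  case/and3P=> lt_ij lt_jk _.
  rewrite leq_max; case: (leqP j t) => [le_jt|/ltnW le_tj].
    by rewrite dec.
  by rewrite (inc j k) ?orbT.
move=> V; set t := (sigma^-1)%g ord0.
have sigma_t : sigma t = 0 :> nat by rewrite /t permKV.
have pos i : i != t -> 0 < sigma i.
  move=> nit; rewrite lt0n; apply: contra nit => /eqP s0.
  by apply/eqP/(@perm_inj _ sigma)/val_inj; rewrite /= s0 sigma_t.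
have V3 (i j k : 'I_n.+1) : i < j -> j < k -> sigma j < maxn (sigma i) (sigma k).
  by move=> lt_ij lt_jk; apply/V/subseq_enum_ord; rewrite /= lt_ij lt_jk.
exists t; split=> // i j.
  move=> lt_ij; case: (eqVneq j t) => [Ejt _|njt le_jt].
    by rewrite Ejt sigma_t pos //; apply: contraTneq lt_ij => ->; rewrite Ejt ltnn.
  have lt_jt : j < t by rewrite ltn_neqAle le_jt andbT; exact: njt.
  by have := V3 _ _ _ lt_ij lt_jt; rewrite sigma_t maxn0.
move=> le_ti; case: (eqVneq i t) => [Eit lt_ij|nit lt_ij].
  by rewrite Eit sigma_t pos //; apply: contraTneq lt_ij => ->; rewrite Eit ltnn.
have lt_ti : t < i by rewrite ltn_neqAle le_ti andbT eq_sym; exact: nit.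
by have := V3 _ _ _ lt_ti lt_ij; rewrite sigma_t max0n.
Qed.

Lemma codom_act_seq n (S : Type) (sigma : {perm 'I_n}) (s : 'I_n -> S) :
  codom (act_seq sigma s) = map s (map (sigma^-1)%g (enum 'I_n)).
Proof. by rewrite -map_comp codomE. Qed.

Lemma codom_rev_seq n (S : Type) (s : 'I_n -> S) : codom (rev_seq s) = rev (codom s).
Proof.
case: n s => [|n] s; first by rewrite !codomE enum_ord0.
apply: (@eq_from_nth _ (s ord0)) => [|i]; rewrite ?size_rev !size_codom //.
rewrite card_ord => lt_i.
rewrite nth_rev ?size_codom ?card_ord // !codomE.
rewrite !(nth_map ord0) -?enumT ?size_enum_ord ?subSS ?ltnS ?leq_subr //.
by rewrite /rev_seq; congr s; apply: val_inj; rewrite /= !nth_enum_ord //; lia.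
Qed.

Lemma codom_inj n (S : Type) (s s' : 'I_n -> S) : codom s = codom s' -> s = s'.
Proof.
rewrite !codomE => /eq_in_map Es; apply: functional_extensionality => i.
by apply: Es; rewrite mem_enum.
Qed.

Lemma peel_codom_act n (S : Type) (sigma : {perm 'I_n.+1}) (s : 'I_n.+1 -> S) :
  in_T sigma -> peel (codom s) (rev (codom (act_seq sigma s))).
Proof.
move/in_T_vshaped=> V; rewrite codom_act_seq codomE -map_rev; apply: peel_map.
apply: vshaped_peel V _ _.
  rewrite perm_sym perm_rev; apply: uniq_perm.
  - by rewrite map_inj_uniq ?enum_uniq //; apply: perm_inj.
  - exact: enum_uniq.
  - move=> i; rewrite mem_enum; apply/mapP.
    by exists (sigma i); rewrite ?mem_enum ?permK.
rewrite rev_sorted sorted_map; apply: sub_sorted (sorted_enum_ord _) => i j.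
by rewrite /= !permKV.
Qed.

Lemma peel_codom_inv n (S : Type) (s : 'I_n.+1 -> S) W : peel (codom s) W ->
  exists2 sigma, in_T sigma & W = rev (codom (act_seq sigma s)).
Proof.
rewrite codomE => /peel_map_inv[w pw ->]; have pew := peel_perm pw.
have uniq_r : uniq (rev w) by rewrite rev_uniq -(perm_uniq pew) enum_uniq.
have size_r : size (rev w) = n.+1 by rewrite size_rev -(perm_size pew) size_enum_ord.
have nth_inj : injective (fun j : 'I_n.+1 => nth ord0 (rev w) j).
  by move=> i j /eqP; rewrite nth_uniq ?size_r // => /eqP/val_inj.
pose pi := perm nth_inj; exists (pi^-1)%g.
  apply/in_T_vshaped/(vshaped_eq_in _ (peel_vshaped (enum_uniq _) pw)) => i _.
  have E : nth ord0 (rev w) ((pi^-1)%g i) = i by have := permKV pi i; rewrite permE.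
  by rewrite -{1}E index_uniq ?size_r.
rewrite codom_act_seq invgK.
have -> : map pi (enum 'I_n.+1) = rev w.
  rewrite -[RHS](mkseq_nth ord0) size_r /mkseq -val_enum_ord -map_comp.
  by apply: eq_map => j; rewrite /= permE.
by rewrite -map_rev revK.
Qed.

Lemma mirrored_peel_eqv n (S : Type) (s s' : 'I_n.+1 -> S) :
  mirrored s s' -> peel_eqv (codom s) (codom s').
Proof.
case=> ss' s's w; split.
  case/peel_codom_inv=> sigma Tsigma ->; have [sigma' [Tsigma' ->]] := ss' _ Tsigma.
  exact: peel_codom_act.
case/peel_codom_inv=> tau Ttau ->; have [tau' [Ttau' ->]] := s's _ Ttau.
exact: peel_codom_act.
Qed.

Theorem mainTheorem17 (S : finType) (hS : #|S| = 2) (m : nat)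
  (s s' : 'I_m -> S) :
  mirrored s s' -> s = s' \/ s = rev_seq s'.
Proof.
case: m s s' => [|n] s s' Hm; first by left; apply: functional_extensionality => -[].
have [E|E] := peel_eqv_rev (mirrored_peel_eqv Hm); [left|right]; apply: codom_inj => //.
by rewrite codom_rev_seq.
Qed.
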